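(* For every integer $k\ge 1$, the complete $(k+1)$-partite graph $K_{1,1,2,\ldots,k}$ (with parts of sizes $1,1,2,3,\ldots,k$) is uniquely $k$-list colorable.
   Context: All graphs are finite, simple and undirected. A list assignment $L$ for a graph $G$ assigns to each vertex $v$ a set $L(v)$ of colors; an $L$-coloring is a proper vertex coloring $c$ of $G$ with $c(v)\in L(v)$ for every vertex $v$. A $k$-list assignment is a list assignment with $|L(v)|=k$ for all $v$. $G$ is uniquely $k$-list colorable (U$k$LC) if there exists a $k$-list assignment $L$ such that $G$ has exactly one $L$-coloring. *)

From mathcomp Require Import all_boot.
Set Implicit Arguments. Unset Strict Implicit. Unset Printing Implicit Defensive.

(* A simple graph: vertex set a finType T, edge relation e : rel T
   (symmetric, irreflexive).  Colors are natural numbers (WLOG: lists are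
   finite, so any color set can be injected into nat). *)
Definition simple_graph (T : finType) (e : rel T) : Prop :=
  symmetric e /\ irreflexive e.

Definition k_list_assignment (T : finType) (k : nat) (L : T -> seq nat) : Prop :=
  forall v, uniq (L v) /\ size (L v) = k.

Definition L_coloring (T : finType) (e : rel T) (L : T -> seq nat)
  (c : T -> nat) : Prop :=
  (forall v, c v \in L v) /\ (forall u v, e u v -> c u != c v).

Definition UkLC (T : finType) (e : rel T) (k : nat) : Prop :=
  exists L : T -> seq nat, k_list_assignment k L /\
    exists c : T -> nat, L_coloring e L c /\
      forall c' : T -> nat, L_coloring e L c' -> forall v, c' v = c v.

(* The complete (k+1)-partite graph K_{1,1,2,...,k}: parts indexed by
   i : 'I_k.+1, part i has size maxn 1 i, i.e. sizes 1,1,2,...,k. *)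
Definition part_size (k : nat) (i : 'I_k.+1) : nat := maxn 1 i.

Definition Kvert (k : nat) : finType := {i : 'I_k.+1 & 'I_(part_size i)}.

Definition Kedge (k : nat) : rel (Kvert k) := fun u v => tag u != tag v.
Arguments Kedge k : clear implicits.

(* Color vertex (i, j) of K_{1,1,2,...,k} with i and give it the list
   {0, ..., k} minus one forbidden color: 1 on part 0, 0 on part 1, and j on
   part i >= 2, so that the forbidden colors of part i >= 2 are exactly
   0, ..., i - 1.  Any proper coloring from these lists uses pairwise distinct
   colors on the k + 1 parts, hence (having only k + 1 colors) is constant on
   each part and induces a permutation g of the parts.  Part i >= 1 forbids
   every color below i, so i <= g i, and an injection with i <= g i is the
   identity. *)

From mathcomp Require Import all_boot.
From mathcomp Require Import zify.
Set Implicit Arguments. Unset Strict Implicit. Unset Printing Implicit Defensive.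

Lemma inj_leq_measure_eq (T : finType) (f : T -> T) (m : T -> nat) :
  injective f -> (forall x, m x <= m (f x)) -> forall x, m (f x) = m x.
Proof.
move=> f_inj m_le x; apply/eqP; rewrite eqn_leq m_le andbT -subn_eq0.
have /eqP : \sum_y (m (f y) - m y) = 0.
  by rewrite sumnB // [X in _ - X](reindex_inj f_inj) subnn.
by rewrite -/(_ == 0) sum_nat_eq0 => /forallP/(_ x).
Qed.

Lemma inj_leq_ord_id n (f : 'I_n -> 'I_n) :
  injective f -> (forall i : 'I_n, i <= f i) -> f =1 id.
Proof. by move=> f_inj f_ge i; apply: val_inj; exact: (inj_leq_measure_eq (m := val) f_inj). Qed.

Section CompleteMultipartite.

Variable k : nat.
Hypothesis k_gt0 : 0 < k.

Lemma Kedge_simple : simple_graph (Kedge k).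
Proof. by split=> [u v | u]; rewrite /Kedge; [rewrite eq_sym | rewrite eqxx]. Qed.

Lemma part_size_gt0 (i : 'I_k.+1) : 0 < part_size i.
Proof. exact: leq_maxl. Qed.

Definition part_rep (i : 'I_k.+1) : Kvert k :=
  Tagged (fun i => 'I_(part_size i)) (Ordinal (part_size_gt0 i)).

Definition forbidden (v : Kvert k) : nat :=
  match val (tag v) with 0 => 1 | 1 => 0 | _ => val (tagged v) end.

Definition Klist (v : Kvert k) : seq nat := rem (forbidden v) (iota 0 k.+1).

Lemma forbidden_ltn (v : Kvert k) : forbidden v < k.+1.
Proof.
case: v => [[[|[|i]] lt_i] j] //=; rewrite /forbidden /=.
by have := ltn_ord j; rewrite /part_size /=; lia.
Qed.

Lemma forbidden_neq_part (v : Kvert k) : forbidden v != val (tag v).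
Proof.
case: v => [[[|[|i]] lt_i] j] //=; rewrite /forbidden /=.
by have := ltn_ord j; rewrite /part_size /=; lia.
Qed.

Lemma mem_Klist (v : Kvert k) x : (x \in Klist v) = (x != forbidden v) && (x < k.+1).
Proof. by rewrite (mem_rem_uniq _ (iota_uniq _ _)) inE mem_iota. Qed.

Lemma Klist_assignment : k_list_assignment k Klist.
Proof.
move=> v; split; first exact/rem_uniq/iota_uniq.
by rewrite size_rem ?size_iota // mem_iota forbidden_ltn.
Qed.

Lemma part_L_coloring : L_coloring (Kedge k) Klist (fun v => val (tag v)).
Proof.
split=> [v | u v]; last by [].
by rewrite mem_Klist eq_sym forbidden_neq_part ltn_ord.
Qed.

Section ProperColoring.

Variable c : Kvert k -> nat.
Hypothesis c_col : L_coloring (Kedge k) Klist c.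

Lemma color_ltn v : c v < k.+1.
Proof. by have := c_col.1 v; rewrite mem_Klist => /andP[]. Qed.

Lemma color_neq_forbidden v : c v != forbidden v.
Proof. by have := c_col.1 v; rewrite mem_Klist => /andP[]. Qed.

Lemma color_eq_same_part u v : c u = c v -> tag u = tag v.
Proof.
move=> e_uv; apply/eqP; apply: contraTT (eqxx (c v)) => ne_uv.
by rewrite -{1}e_uv c_col.2.
Qed.

Definition part_color (i : 'I_k.+1) : 'I_k.+1 := inord (c (part_rep i)).

Lemma part_colorE i : val (part_color i) = c (part_rep i).
Proof. exact/inordK/color_ltn. Qed.

Lemma part_color_inj : injective part_color.
Proof.
by move=> i j /(congr1 val); rewrite !part_colorE => /color_eq_same_part.
Qed.

Lemma color_const_on_parts v : c v = c (part_rep (tag v)).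
Proof.
have [g_inv _ gK] := injF_bij part_color_inj.
have e_iv : c (part_rep (g_inv (inord (c v)))) = c v.
  by rewrite -part_colorE gK; exact/inordK/color_ltn.
by rewrite -(color_eq_same_part e_iv) e_iv.
Qed.

Lemma part_color_ge (i : 'I_k.+1) : i <= part_color i.
Proof.
rewrite leqNgt; apply/negP => lt_gi.
have lt_gi_size : part_color i < part_size i by rewrite (leq_trans lt_gi) ?leq_maxr.
(* The vertex (i, part_color i) forbids the color part_color i when i >= 2. *)
pose w := Tagged (fun i => 'I_(part_size i)) (Ordinal lt_gi_size).
have := color_neq_forbidden w; rewrite color_const_on_parts -part_colorE.
rewrite /forbidden /=; move: lt_gi; case: (val i) => [|[|n]] //.
by rewrite ltnS leqn0 => /eqP ->.
by rewrite eqxx.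
Qed.

Lemma color_eq_part v : c v = val (tag v).
Proof.
rewrite color_const_on_parts -part_colorE.
by rewrite (inj_leq_ord_id part_color_inj part_color_ge).
Qed.

End ProperColoring.

End CompleteMultipartite.

Theorem mainTheorem17 (k : nat) : 1 <= k ->
  simple_graph (Kedge k) /\ UkLC (Kedge k) k.
Proof.
move=> k_gt0; split; first exact: Kedge_simple.
exists (@Klist k); split; first exact: Klist_assignment.
exists (fun v => val (tag v)); split; first exact: part_L_coloring.
by move=> c c_col v; apply: color_eq_part.
Qed.
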